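(* Let $\theta\in\Theta\subseteq\mathbb{R}^n$ be a parameter vector and $\mathbf{y}$ observed data, with likelihood $p(\mathbf{y}|\theta)$, prior density $p(\theta)$, and posterior density $p(\theta|\mathbf{y})=p(\mathbf{y}|\theta)p(\theta)/p(\mathbf{y})$, where $p(\mathbf{y})=\int_\Theta p(\mathbf{y}|\theta)p(\theta)\,d\theta$. Let $\mathcal{Q}$ be a family of densities on $\Theta$ and let $q^*$ be the variational Bayes approximate posterior density $$q^*=\operatorname{argmin}_{q\in\mathcal{Q}} \int_\Theta q(\theta)\ln\frac{q(\theta)}{p(\theta|\mathbf{y})}\,d\theta .$$ Let $\Omega_p=\{\theta: p(\theta|\mathbf{y})>0\}$ be the support of the posterior density. Suppose that (i) for the given data $\mathbf{y}$ the likelihood $p(\mathbf{y}|\theta)$ is bounded from above over the parameter space; (ii) the prior density $p(\theta)$ is proper; (iii) $q^*$ is bounded from above; (iv) $q^*$ is continuous and differentiable; and suppose further that the posterior density $p(\theta|\mathbf{y})$ is continuous and differentiable on $\Omega_p$. Then the posterior density dominates $q^*$, that is, $p(\mathbf{y}|\theta)p(\theta)=0 \Rightarrow q^*(\theta)=0$.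
   Context: The VB approximate posterior $q^*$ is the minimizer over the family $\mathcal{Q}$ of the Kullback–Leibler divergence $KL[q\,\|\,p(\cdot|\mathbf{y})]=\int q\ln(q/p(\cdot|\mathbf{y}))$.
   Formalization: Some q ∈ $\mathcal{Q}$ has finite KL divergence from the posterior, and the conclusion $p(\mathbf{y}|\theta)p(\theta)=0 \Rightarrow q^*(\theta)=0$ holds only for Lebesgue-almost every θ ∈ Θ rather than for every θ. The statement above fails without it. *)

From HB Require Import structures.
From mathcomp Require Import all_boot all_order all_algebra.
From mathcomp Require Import all_classical all_reals all_analysis.
Set Implicit Arguments. Unset Strict Implicit. Unset Printing Implicit Defensive.
Import Order.TTheory GRing.Theory Num.Theory.
Import numFieldNormedType.Exports.
Local Open Scope classical_set_scope.
Local Open Scope ring_scope.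

Definition Rn (R : realType) (n : nat) :=
  g_sigma_algebraType (@open 'rV[R]_n).

Definition is_lebesgue_Rn (R : realType) (n : nat)
    (mu : {measure set (Rn R n) -> \bar R}) : Prop :=
  forall a b : 'rV[R]_n, (forall i, a ord0 i <= b ord0 i) ->
    mu [set x : 'rV[R]_n | forall i, a ord0 i <= x ord0 i <= b ord0 i]
    = (\prod_(i < n) (b ord0 i - a ord0 i))%:E.

Definition is_density (R : realType) (n : nat)
    (mu : {measure set (Rn R n) -> \bar R}) (Theta : set (Rn R n))
    (f : 'rV[R]_n -> R) : Prop :=
  measurable_fun Theta (f : Rn R n -> R) /\
  (forall x, Theta x -> 0 <= f x) /\
  (\int[mu]_(x in Theta) (f x)%:E = 1)%E.

Definition evidence (R : realType) (n : nat)
    (mu : {measure set (Rn R n) -> \bar R}) (Theta : set (Rn R n))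
    (lik prior : 'rV[R]_n -> R) : \bar R :=
  (\int[mu]_(x in Theta) (lik x * prior x)%:E)%E.

Definition posterior (R : realType) (n : nat)
    (mu : {measure set (Rn R n) -> \bar R}) (Theta : set (Rn R n))
    (lik prior : 'rV[R]_n -> R) : 'rV[R]_n -> R :=
  fun x => lik x * prior x / fine (evidence mu Theta lik prior).

(* the integrand q ln (q/p), with conventions 0 ln(0/p) = 0 and
   q ln(q/0) = +oo for q > 0 *)
Definition kl_integrand (R : realType) (a b : R) : \bar R :=
  if a == 0 then 0%E else if b <= 0 then +oo%E else (a * ln (a / b))%:E.

Definition KL (R : realType) (n : nat)
    (mu : {measure set (Rn R n) -> \bar R}) (Theta : set (Rn R n))
    (q p : 'rV[R]_n -> R) : \bar R :=
  (\int[mu]_(x in Theta) kl_integrand (q x) (p x))%E.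

Definition is_VB_posterior (R : realType) (n : nat)
    (mu : {measure set (Rn R n) -> \bar R}) (Theta : set (Rn R n))
    (Q : set ('rV[R]_n -> R)) (post qs : 'rV[R]_n -> R) : Prop :=
  Q qs /\ forall q, Q q -> (KL mu Theta qs post <= KL mu Theta q post)%E.

(** Finite KL divergence forces absolute continuity.  Since [q ln (q/p) >= q - p],
    the negative part of the integrand of [KL[q* || p]] is bounded by the
    posterior, which has integral at most 1; as [KL[q* || p]] is finite (it is at
    most the finite KL of some member of the family), the positive part is
    integrable too.  But the integrand is [+oo] wherever
    [q* > 0 = p(y|theta) p(theta)], so that set is null. *)

From HB Require Import structures.
From mathcomp Require Import all_boot all_order all_algebra.
From mathcomp Require Import all_classical all_reals all_analysis.
From mathcomp Require Import measurable_realfun.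

Set Implicit Arguments.
Unset Strict Implicit.
Unset Printing Implicit Defensive.
Import Order.TTheory GRing.Theory Num.Theory.
Import numFieldNormedType.Exports.
Local Open Scope classical_set_scope.
Local Open Scope ring_scope.

Section kl_integrand.
Variable R : realType.
Implicit Types a b : R.

Lemma ln_le_subr1 (x : R) : 0 < x -> ln x <= x - 1.
Proof.
move=> x0; have := @le_ln1Dx R (x - 1); rewrite [1 + _]addrC subrK; apply.
by rewrite ltrBrDl subrr.
Qed.

Lemma subr_le_mul_ln_div a b : 0 < a -> 0 < b -> a - b <= a * ln (a / b).
Proof.
move=> a0 b0.
rewrite -[a / b]invf_div lnV ?posrE ?divr_gt0// mulrN lerNr opprB.
move: (ln_le_subr1 (divr_gt0 b0 a0)) => /(ler_wpM2l (ltW a0)) /le_trans; apply.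
by rewrite mulrBr mulr1 mulrCA divff ?gt_eqF// mulr1.
Qed.

Lemma kl_integrand_ge a b : 0 <= a -> 0 <= b -> ((a - b)%:E <= kl_integrand a b)%E.
Proof.
move=> a0 b0; rewrite /kl_integrand.
have [->|an0] := eqVneq a 0; first by rewrite sub0r lee_fin oppr_le0.
case: (leP b 0) => [_|bp]; first exact: leey.
by rewrite lee_fin subr_le_mul_ln_div // lt_neqAle eq_sym an0.
Qed.

Lemma kl_integrand_r0 a : a != 0 -> kl_integrand a 0 = +oo%E.
Proof. by rewrite /kl_integrand lexx => /negbTE ->. Qed.

End kl_integrand.

Section integral_pinfty.
Local Open Scope ereal_scope.
Context d (T : measurableType d) (R : realType).
Variable mu : {measure set T -> \bar R}.
Implicit Types (D A : set T) (f g : T -> \bar R).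

Lemma ge0_le_integral_nonmeasurable D f g :
  (forall x, D x -> 0 <= f x) -> (forall x, D x -> f x <= g x) ->
  \int[mu]_(x in D) f x <= \int[mu]_(x in D) g x.
Proof.
move=> f0 fg.
have g0 x : D x -> 0 <= g x by move=> Dx; exact: le_trans (f0 _ Dx) (fg _ Dx).
rewrite !ge0_integralE//.
apply/ge_ereal_sup => _ [h hf <-]; apply: ereal_sup_ubound; exists h => //= x.
apply: le_trans (hf x) _; rewrite /patch; case: ifP => // /set_mem Dx.
exact: fg.
Qed.

Lemma integral_funepos_lty D f :
  \int[mu]_(x in D) f x < +oo -> \int[mu]_(x in D) f^\- x < +oo ->
  \int[mu]_(x in D) f^\+ x < +oo.
Proof.
move=> f_fin fneg_fin; have fneg_fn : \int[mu]_(x in D) f^\- x \is a fin_num.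
  by rewrite ge0_fin_numE // integral_ge0 // => x _; exact: funeneg_ge0.
rewrite -(subeK (\int[mu]_(x in D) f^\+ x) fneg_fn) -integralE.
exact: lte_add_pinfty.
Qed.

(** [g] dominates [+oo * \1_A], so a finite integral leaves no room for [mu A > 0]. *)
Lemma integral_lty_pinfty_null D A g :
  measurable D -> measurable A -> A `<=` D ->
  (forall x, D x -> 0 <= g x) -> (forall x, A x -> g x = +oo) ->
  \int[mu]_(x in D) g x < +oo -> mu A = 0.
Proof.
move=> mD mA AD g0 gA gfin.
have : +oo * mu A <= \int[mu]_(x in D) g x.
  rewrite -[X in +oo * mu X](setIidl AD) -integral_indic // -ge0_integralZl //;
    last exact/measurable_EFinP/measurable_indic.
  apply: ge0_le_integral_nonmeasurable => [x _|x Dx].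
    by rewrite mule_ge0 // lee_fin.
  rewrite indicE; have [Ax|nAx] := boolP (x \in A).
    by rewrite gA ?leey //; exact: set_mem.
  by rewrite mule0 g0.
have [//|muA_neq0] := eqVneq (mu A) 0.
by rewrite gt0_mulye ?lt0e ?muA_neq0 ?measure_ge0 // leye_eq (lt_eqF gfin).
Qed.

End integral_pinfty.

Section KL_finite.
Local Open Scope ereal_scope.
Context (R : realType) (n : nat).
Variables (mu : {measure set (Rn R n) -> \bar R}) (Theta : set (Rn R n)).
Hypothesis mTheta : measurable Theta.

Lemma KL_lty_dominated (q p : 'rV[R]_n -> R) :
  measurable_fun Theta (q : Rn R n -> R) ->
  measurable_fun Theta (p : Rn R n -> R) ->
  (forall x, Theta x -> (0 <= q x)%R) -> (forall x, Theta x -> (0 <= p x)%R) ->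
  \int[mu]_(x in Theta) (p x)%:E < +oo -> KL mu Theta q p < +oo ->
  {ae mu, forall x : Rn R n, Theta x -> p x = 0%R -> q x = 0%R}.
Proof.
move=> mq mp q0 p0 pfin KLfin.
pose K x := kl_integrand (q x) (p x).
have Kneg_le x : Theta x -> K^\- x <= (p x)%:E.
  move=> Tx; rewrite funenegE ge_max lee_fin p0 // andbT leeNl.
  apply: le_trans (kl_integrand_ge (q0 _ Tx) (p0 _ Tx)).
  by rewrite -EFinN lee_fin lerDr q0.
have Kpos_fin : \int[mu]_(x in Theta) K^\+ x < +oo.
  apply: integral_funepos_lty => //; apply: le_lt_trans pfin.
  by apply: ge0_le_integral_nonmeasurable => // x _; exact: funeneg_ge0.
pose A := (Theta `&` p @^-1` [set 0%R]) `&` (Theta `&` q @^-1` [set~ 0%R]).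
have mA : measurable A.
  apply: measurableI; first exact: mp mTheta _ (measurable_set1 _).
  exact: mq mTheta _ (measurableC (measurable_set1 _)).
have muA0 : mu A = 0.
  apply: (integral_lty_pinfty_null mTheta mA _ _ _ Kpos_fin) => //.
  - by move=> x [[]].
  move=> x [[_ /= px0] [_ /= /eqP qx0]].
  by rewrite funeposE /K px0 kl_integrand_r0 // gt0_maxe ?ltry.
exists A; split => // x /= /not_implyP [Tx /not_implyP [px0 qx0]].
by split; split.
Qed.

End KL_finite.

Lemma integral_posterior_le1 (R : realType) (n : nat)
    (mu : {measure set (Rn R n) -> \bar R}) (Theta : set (Rn R n))
    (lik prior : 'rV[R]_n -> R) :
  measurable Theta ->
  measurable_fun Theta ((fun x => lik x * prior x) : Rn R n -> R) ->
  (forall x, Theta x -> 0 <= lik x * prior x) ->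
  (0 < evidence mu Theta lik prior)%E ->
  (\int[mu]_(x in Theta) (posterior mu Theta lik prior x)%:E <= 1)%E.
Proof.
move=> mT mlp lp0 ev0.
under eq_integral do rewrite /posterior EFinM.
rewrite ge0_integralZr //; last 2 first.
- exact/measurable_EFinP.
- by rewrite lee_fin invr_ge0 fine_ge0 // ltW.
move: ev0; rewrite /evidence.
case: (\int[mu]_(x in Theta) _)%E => [r| |] //= r0.
  by rewrite -EFinM divff ?gt_eqF.
by rewrite invr0 mule0.
Qed.

Theorem corollary1 (R : realType) (n : nat)
    (mu : {measure set (Rn R n) -> \bar R})
    (Theta : set (Rn R n))
    (lik prior : 'rV[R]_n -> R)
    (Q : set ('rV[R]_n -> R))
    (qs : 'rV[R]_n -> R) :
  is_lebesgue_Rn mu ->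
  measurable Theta ->
  (* likelihood p(y|.) for the fixed data y *)
  measurable_fun Theta (lik : Rn R n -> R) ->
  (forall x, Theta x -> 0 <= lik x) ->
  (* posterior well defined: p(y) > 0 *)
  (0 < evidence mu Theta lik prior)%E ->
  (* Q is a family of densities on Theta *)
  (forall q, Q q -> is_density mu Theta q) ->
  (* the VB problem is non-degenerate: some member of Q has finite KL *)
  (exists2 q, Q q & (KL mu Theta q (posterior mu Theta lik prior) < +oo)%E) ->
  (* qs is the VB approximate posterior *)
  is_VB_posterior mu Theta Q (posterior mu Theta lik prior) qs ->
  (* (i) likelihood bounded from above *)
  (exists M : R, forall x, Theta x -> lik x <= M) ->
  (* (ii) proper prior *)
  is_density mu Theta prior ->
  (* (iii) qs bounded from above *)
  (exists M : R, forall x, Theta x -> qs x <= M) ->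
  (* (iv) qs continuous and differentiable *)
  {within Theta, continuous qs} ->
  (forall x, Theta x -> differentiable qs x) ->
  (* posterior continuous and differentiable on its support Omega_p *)
  {within [set x | Theta x /\ 0 < posterior mu Theta lik prior x],
     continuous (posterior mu Theta lik prior)} ->
  (forall x, Theta x -> 0 < posterior mu Theta lik prior x ->
     differentiable (posterior mu Theta lik prior) x) ->
  (* conclusion: the posterior dominates qs *)
  {ae mu, forall x : Rn R n, Theta x -> lik x * prior x = 0 -> qs x = 0}.
Proof.
move=> _ mT mlik lik0 ev0 Qdens [q0 Qq0 KLq0] [Qqs qs_min] _ [mprior [prior0 _]]
  _ _ _ _ _.
set post := posterior mu Theta lik prior.
have [mqs [qs0 _]] := Qdens _ Qqs.
have lp0 x : Theta x -> 0 <= lik x * prior x by move=> Tx; rewrite mulr_ge0 ?lik0 ?prior0.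
have mlp : measurable_fun Theta ((fun x => lik x * prior x) : Rn R n -> R).
  exact: measurable_funM.
have mpost : measurable_fun Theta (post : Rn R n -> R).
  exact: measurable_funM.
have post0 x : Theta x -> 0 <= post x.
  by move=> Tx; rewrite divr_ge0 ?lp0 ?fine_ge0 ?ltW.
have post_fin : (\int[mu]_(x in Theta) (post x)%:E < +oo)%E.
  exact: le_lt_trans (integral_posterior_le1 mT mlp lp0 ev0) (ltry 1).
have KL_fin : (KL mu Theta qs post < +oo)%E := le_lt_trans (qs_min _ Qq0) KLq0.
apply: filterS _ (KL_lty_dominated mT mqs mpost qs0 post0 post_fin KL_fin).
by move=> x dom Tx lpx; rewrite dom // /post /posterior lpx mul0r.
Qed.
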